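(* Let $R$ be as in the standing setup. If the $m$-adic filtration of $R$ satisfies the BF condition, then it is essentially divisible.
   Context: Standing setup: $k$ is a field and $R$ is a complete local domain with $k\subseteq R\subseteq k[[t]]$, residue field $k$, maximal ideal $m$, and nonzero conductor $(R:k[[t]])\neq 0$. Let $v$ be the $t$-adic valuation, $S=v(R)=\{v(r): r\in R, r\neq 0\}$, $e$ the smallest positive element of $S$, and $w_j$ the smallest element of $S$ congruent to $j\pmod e$ ($j=0,\dots,e-1$). For a nonzero ideal $I$, $v(I)=\{v(a): a\in I, a\ne0\}$; $m^0=R$. For $a\in R$, $\operatorname{ord}(a)=\max\{i: a\in m^i\}$; for $s\in S$, $\operatorname{vord}(s)=\max\{i: s\in v(m^i)\}$. A minimal reduction of $m$ is $xR$ with $v(x)=e$. The $m$-adic filtration is essentially divisible with respect to $xR$ if for every $u\in v(xR)$ there is $a\in xR$ with $v(a)=u$ and $\operatorname{ord}(a)=\operatorname{vord}(u)$; it is essentially divisible if this holds for some $x$ with $v(x)=e$. The $m$-adic filtration satisfies the BF condition if there exist $x\in R$ with $v(x)=e$ and $f_0,\ldots,f_{e-1}\in R$ with $v(f_j)=w_j$ such that for every $i\ge0$, $m^i$ is a free $k[[x]]$-module with a basis of the form $x^{h_0}f_0,\ldots,x^{h_{e-1}}f_{e-1}$ for some nonnegative integers $h_j$ (depending on $i$). *)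

(* Formal power series k[[t]] are modelled as coefficient
   sequences nat -> k with the Cauchy product; subrings of k[[t]] are
   predicates on this type. *)
From HB Require Import structures.
From mathcomp Require Import all_boot all_order all_algebra.
Set Implicit Arguments. Unset Strict Implicit. Unset Printing Implicit Defensive.
Import Order.TTheory GRing.Theory Num.Theory.
Local Open Scope ring_scope.

Section Series.
Variable k : fieldType.

Definition series := nat -> k.

Definition szero : series := fun _ => 0.
Definition sconst (c : k) : series := fun n => if n == 0%N then c else 0.
Definition sadd (f g : series) : series := fun n => f n + g n.
Definition sopp (f : series) : series := fun n => - f n.
Definition smul (f g : series) : series :=
  fun n => \sum_(i < n.+1) f i * g (n - i)%N.
Definition spow (x : series) (i : nat) : series := iter i (smul x) (sconst 1).
Definition ssum (I : finType) (F : I -> series) : series :=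
  fun n => \sum_(j : I) F j n.
(** substitution g(x) of a series x with x 0 = 0 into g in k[[X]]:
    coefficient n of sum_i g_i x^i only involves i <= n. *)
Definition scomp (g x : series) : series :=
  fun n => \sum_(i < n.+1) g i * spow x i n.

(** t-adic valuation: is_val a n  <->  a <> 0 and v(a) = n *)
Definition is_val (a : series) (n : nat) : Prop :=
  a n != 0 /\ forall i, (i < n)%N -> a i = 0.

Variable R : series -> Prop.

(** maximal ideal of R: the elements of R with zero constant term
    (the local / residue-field-k hypotheses below make this the maximal ideal). *)
Definition mideal (a : series) : Prop := R a /\ a 0%N = 0.

Fixpoint mpow (i : nat) : series -> Prop :=
  match i with
  | 0 => R
  | i'.+1 => fun c => exists (N : nat) (a b : 'I_N -> series),
       (forall l, mideal (a l) /\ mpow i' (b l)) /\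
       c = ssum (fun l => smul (a l) (b l))
  end.

Definition standing : Prop :=
  (* k <= R and R is a subring of k[[t]] (hence a domain) *)
  (forall c, R (sconst c)) /\
  (forall a b, R a -> R b -> R (sadd a b)) /\
  (forall a, R a -> R (sopp a)) /\
  (forall a b, R a -> R b -> R (smul a b)) /\
  (* local with maximal ideal m = mideal and residue field k:
     every element outside m is a unit of R *)
  (forall a, R a -> a 0%N != 0 -> exists b, R b /\ smul a b = sconst 1) /\
  (* complete in the m-adic topology *)
  (forall a : nat -> series, (forall n, R (a n)) ->
      (forall n, mpow n (sadd (a n.+1) (sopp (a n)))) ->
      exists L, R L /\ forall n, mpow n (sadd L (sopp (a n)))) /\
  (* nonzero conductor (R : k[[t]]) *)
  (exists c, c <> szero /\ forall g, R (smul c g)).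

Definition inS (s : nat) : Prop := exists r, R r /\ is_val r s.
Definition is_e (e : nat) : Prop :=
  (0 < e)%N /\ inS e /\ forall s, inS s -> (0 < s)%N -> (e <= s)%N.
Definition is_w (e j w : nat) : Prop :=
  inS w /\ w = j %[mod e] /\ forall s, inS s -> s = j %[mod e] -> (w <= s)%N.

Definition inv (I : series -> Prop) (u : nat) : Prop :=
  exists a, I a /\ is_val a u.

(** ord(a) = n  (max {i : a in m^i} = n; the m^i are decreasing) *)
Definition is_ord (a : series) (n : nat) : Prop := mpow n a /\ ~ mpow n.+1 a.
Definition is_vord (s n : nat) : Prop :=
  inv (mpow n) s /\ ~ inv (mpow n.+1) s.

Definition xideal (x : series) (a : series) : Prop :=
  exists r, R r /\ a = smul x r.

Definition ess_div_wrt (x : series) : Prop :=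
  forall u, inv (xideal x) u ->
    exists a n, xideal x a /\ is_val a u /\ is_vord u n /\ is_ord a n.

Definition ess_div : Prop :=
  exists e x, is_e e /\ R x /\ is_val x e /\ ess_div_wrt x.

Definition BF : Prop :=
  exists e x (f : 'I_e -> series),
    is_e e /\ R x /\ is_val x e /\
    (forall j : 'I_e, R (f j) /\ exists w, is_val (f j) w /\ is_w e j w) /\
    forall i : nat, exists h : 'I_e -> nat,
      (* m^i is the k[[x]]-span of x^(h_j) f_j ... *)
      (forall a, mpow i a <->
         exists g : 'I_e -> series,
           a = ssum (fun j => smul (scomp (g j) x) (smul (spow x (h j)) (f j)))) /\
      (forall g : 'I_e -> series,
         ssum (fun j => smul (scomp (g j) x) (smul (spow x (h j)) (f j))) = szero ->
         forall j, g j = szero).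

End Series.

(* Let xR be a minimal reduction and u in v(xR), so u = e + s with s in S.
   Put n = vord(u) and pick b in m^n with v(b) = u.  By the BF condition b is a
   k[[x]]-combination of x^(h_j) f_j; the nonzero terms have valuations
   e p + w_j, pairwise distinct modulo e, so v(b) = e p + w_j for a single j
   and some p >= h_j.  Then a = x^p f_j lies in m^n, has valuation u, and
   p >= 1 because w_j <= s; hence a lies in xR and ord(a) = n = vord(u). *)
From Pilot Require Import Defs.
From HB Require Import structures.
From mathcomp Require Import all_boot all_order all_algebra zify.
From Stdlib Require Import FunctionalExtensionality Classical.
Set Implicit Arguments. Unset Strict Implicit. Unset Printing Implicit Defensive.
Import Order.TTheory GRing.Theory Num.Theory.
Local Open Scope ring_scope.

Section SeriesAlgebra.
Variable k : fieldType.
Implicit Types f g h x a b : series k.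

Lemma series_ext f g : (forall n, f n = g n) -> f = g.
Proof. exact: functional_extensionality. Qed.

Definition strunc f (N : nat) : {poly k} := \poly_(i < N.+1) f i.

Lemma smul_strunc f g (N m : nat) :
  (m <= N)%N -> smul f g m = (strunc f N * strunc g N)`_m.
Proof.
move=> le_mN; rewrite coefM; apply: eq_bigr => i _.
by rewrite !coef_poly ifT ?ifT //; move: (ltn_ord i); lia.
Qed.

Lemma coefM_eq_low (p q r s : {poly k}) (m : nat) :
  (forall j, (j <= m)%N -> p`_j = q`_j) ->
  (forall j, (j <= m)%N -> r`_j = s`_j) -> (p * r)`_m = (q * s)`_m.
Proof.
move=> pq rs; rewrite !coefM; apply: eq_bigr => i _.
by rewrite pq ?rs ?leq_subr // -ltnS.
Qed.

Lemma mulsA f g h : smul (smul f g) h = smul f (smul g h).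
Proof.
apply: series_ext => m; rewrite !(smul_strunc _ _ (leqnn m)).
have struncM f1 g1 j : (j <= m)%N ->
    (strunc (smul f1 g1) m)`_j = (strunc f1 m * strunc g1 m)`_j.
  by move=> le_jm; rewrite coef_poly ltnS le_jm (smul_strunc _ _ le_jm).
by rewrite (coefM_eq_low (struncM f g) (fun _ _ => erefl))
  [RHS](coefM_eq_low (fun _ _ => erefl) (struncM g h)) mulrA.
Qed.

Lemma mulsC f g : smul f g = smul g f.
Proof.
by apply: series_ext => m; rewrite !(smul_strunc _ _ (leqnn m)) mulrC.
Qed.

Lemma mul1s f : smul (sconst 1) f = f.
Proof.
apply: series_ext => m; rewrite /smul big_ord_recl subn0 mul1r big1 ?addr0 //.
by move=> i _; rewrite mul0r.
Qed.

Lemma mul0s f : smul (szero k) f = szero k.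
Proof. by apply: series_ext => m; rewrite /smul big1 // => i _; rewrite mul0r. Qed.

Lemma muls0 f : smul f (szero k) = szero k.
Proof. by rewrite mulsC mul0s. Qed.

Lemma spowD x (p q : nat) : smul (spow x p) (spow x q) = spow x (p + q).
Proof.
elim: p => [|p IHp]; first by rewrite mul1s.
by rewrite addSn /= mulsA IHp.
Qed.

Lemma scomp0 x : scomp (szero k) x = szero k.
Proof. by apply: series_ext => n; rewrite /scomp big1 // => i _; rewrite mul0r. Qed.

Lemma ssum_eq0 (I : finType) (F : I -> series k) :
  (forall j, F j = szero k) -> ssum F = szero k.
Proof. by move=> F0; apply: series_ext => n; rewrite /ssum big1 // => j _; rewrite F0. Qed.

Lemma ssum_single (I : finType) (F : I -> series k) j0 :
  (forall j, j != j0 -> F j = szero k) -> ssum F = F j0.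
Proof.
move=> F0; apply: series_ext => n; rewrite /ssum (bigD1 j0) //= big1 ?addr0 //.
by move=> j /F0 ->.
Qed.

End SeriesAlgebra.

Section Valuation.
Variable k : fieldType.
Implicit Types f g x a b : series k.

Lemma is_val_inj a (u v : nat) : is_val a u -> is_val a v -> u = v.
Proof.
move=> [au lt_u] [av lt_v]; case: (ltngtP u v) => // [/lt_v|/lt_u] a0.
  by rewrite a0 eqxx in au.
by rewrite a0 eqxx in av.
Qed.

Lemma is_val_exists a : a <> szero k -> exists u, is_val a u.
Proof.
move=> a_neq0; have ex_nz : exists n, a n != 0.
  apply: NNPP => all0; apply: a_neq0; apply: series_ext => n.
  by apply/eqP/negPn/negP => nz; apply: all0; exists n.
exists (ex_minn ex_nz); case: ex_minnP => m am m_min; split => // i lt_im.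
by apply/eqP; apply: contraTT lt_im => /m_min; rewrite -leqNgt.
Qed.

Lemma is_val_neq0 a u : is_val a u -> a <> szero k.
Proof. by move=> [au _] a0; rewrite a0 eqxx in au. Qed.

Lemma is_valM f g (p q : nat) :
  is_val f p -> is_val g q -> is_val (smul f g) (p + q).
Proof.
move=> [fp f_low] [gq g_low].
have vanish m (i : 'I_m.+1) : (i : nat) != p -> (m <= p + q)%N -> f i * g (m - i)%N = 0.
  move=> ne_ip le_m; case: (ltnP i p) => [/f_low ->|le_pi]; first by rewrite mul0r.
  by rewrite g_low ?mulr0 //; move: (ltn_ord i); lia.
split=> [|m lt_m].
  have lt_p : (p < (p + q).+1)%N by rewrite ltnS leq_addr.
  rewrite /smul (bigD1 (Ordinal lt_p)) //= big1 ?addr0; first by rewrite addKn mulf_neq0.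
  by move=> i ne_i; apply: vanish => //; apply: contraNneq ne_i => eq_i; apply/eqP/val_inj.
rewrite /smul big1 // => i _; case: (eqVneq (i : nat) p) => [eq_ip|]; last first.
  by move=> ne_ip; apply: vanish => //; apply: ltnW.
by rewrite g_low ?mulr0 //; move: (ltn_ord i); lia.
Qed.

Lemma is_val_spow x (e q : nat) : is_val x e -> is_val (spow x q) (e * q).
Proof.
move=> vx; elim: q => [|q IHq].
  by rewrite muln0; split=> //; rewrite /spow /= /sconst /= oner_neq0.
by rewrite mulnS; apply: is_valM.
Qed.

Lemma is_val_scomp g x (e p : nat) :
  (0 < e)%N -> is_val x e -> is_val g p -> is_val (scomp g x) (e * p).
Proof.
move=> e_gt0 vx [gp g_low].
have vanish n (i : 'I_n.+1) : (i : nat) != p -> (n <= e * p)%N -> g i * spow x i n = 0.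
  move=> ne_ip le_n; case: (ltnP i p) => [/g_low ->|le_pi]; first by rewrite mul0r.
  rewrite (is_val_spow i vx).2 ?mulr0 //.
  by apply: leq_trans (_ : e * p.+1 <= _)%N; [rewrite mulnS; lia | rewrite leq_mul2l; lia].
split=> [|n lt_n].
  have lt_p : (p < (e * p).+1)%N by rewrite ltnS leq_pmull.
  rewrite /scomp (bigD1 (Ordinal lt_p)) //= big1 ?addr0.
    by rewrite mulf_neq0 //; case: (is_val_spow p vx).
  by move=> i ne_i; apply: vanish => //; apply: contraNneq ne_i => eq_i; apply/eqP/val_inj.
rewrite /scomp big1 // => i _; case: (eqVneq (i : nat) p) => [eq_ip|]; last first.
  by move=> ne_ip; apply: vanish => //; apply: ltnW.
by rewrite (is_val_spow i vx).2 ?mulr0 // eq_ip.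
Qed.

Definition smonomial (q : nat) : series k := fun i => if i == q then 1 else 0.

Lemma scomp_monomial x (e q : nat) :
  (0 < e)%N -> is_val x e -> scomp (smonomial q) x = spow x q.
Proof.
move=> e_gt0 vx; apply: series_ext => n; rewrite /scomp /smonomial.
case: (ltnP q n.+1) => [lt_q|le_nq].
  rewrite (bigD1 (Ordinal lt_q)) //= eqxx mul1r big1 ?addr0 // => i ne_i.
  by case: eqP => [eq_i|_]; [case/eqP: ne_i; apply: val_inj | rewrite mul0r].
rewrite (is_val_spow q vx).2; last by apply: leq_trans le_nq _; apply: leq_pmull.
by rewrite big1 // => i _; case: eqP => [eq_i|_]; [move: (ltn_ord i); lia | rewrite mul0r].
Qed.

Lemma is_val_ssum_min (I : finType) (F : I -> series k) j0 (v : nat) :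
  is_val (F j0) v -> (forall j l, j != j0 -> (l <= v)%N -> F j l = 0) ->
  is_val (ssum F) v.
Proof.
move=> [Fv F_low] others; split=> [|l lt_lv].
  by rewrite /ssum (bigD1 j0) //= big1 ?addr0 // => j /others ->.
rewrite /ssum big1 // => j _; case: (eqVneq j j0) => [->|/others -> //].
  exact: F_low.
exact: ltnW.
Qed.

Lemma is_val_ssum_distinct (I : finType) (F : I -> series k) :
  (forall i j (v : nat), is_val (F i) v -> is_val (F j) v -> i = j) ->
  ssum F <> szero k -> exists j (v : nat), is_val (F j) v /\ is_val (ssum F) v.
Proof.
move=> val_inj_F sum_neq0.
have val_or_0 j : exists v : nat, F j = szero k \/ is_val (F j) v.
  case: (classic (F j = szero k)) => [F0|]; first by exists 0%N; left.
  by case/is_val_exists => v Fv; exists v; right.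
have [V HV] := fin_all_exists val_or_0.
(* V j is junk when F j = 0; nz j detects the nonzero terms. *)
pose nz j := F j (V j) != 0.
have nzP j : nz j -> is_val (F j) (V j).
  by rewrite /nz; case: (HV j) => // ->; rewrite eqxx.
have [j0 nz_j0] : exists j0, nz j0.
  apply: NNPP => no_nz; apply: sum_neq0; apply: ssum_eq0 => j.
  case: (HV j) => // Fj; case: no_nz; exists j; exact: Fj.1.
case: (arg_minnP V nz_j0) => jm nz_jm V_min.
exists jm, (V jm); split; first exact: nzP.
apply: is_val_ssum_min (nzP _ nz_jm) _ => j l ne_j le_l.
case: (HV j) => [->|[Fj F_low]] //; apply: F_low; apply: leq_ltn_trans le_l _.
rewrite ltn_neqAle V_min ?andbT //; apply: contra_neq ne_j => eq_V.
by apply: (val_inj_F _ _ (V j) (nzP _ Fj)); rewrite -eq_V; apply: nzP.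
Qed.

End Valuation.

Lemma ex_true_then_false (P : nat -> Prop) (N : nat) :
  P 0%N -> ~ P N -> exists n, P n /\ ~ P n.+1.
Proof.
elim: N => [//|N IHN] P0 PN.
by case: (classic (P N)) => [PN'|/IHN]; [exists N | apply].
Qed.

Section IdealsOfR.
Variables (k : fieldType) (R : series k -> Prop).

Lemma mpow_low (i : nat) c : mpow R i c -> forall l, (l < i)%N -> c l = 0.
Proof.
elim: i c => [|i IHi] c //= [N [a [b [ab_in ->]]]] l lt_li.
rewrite /ssum big1 // => j _; rewrite /smul big1 // => t _.
have [[_ a0] bi] := ab_in j.
case: (posnP t) => [->|t_gt0]; first by rewrite a0 mul0r.
by rewrite (IHi _ bi) ?mulr0 //; move: (ltn_ord t); lia.
Qed.

Lemma inS_vord (u : nat) : inS R u -> exists n, is_vord R u n.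
Proof.
move=> Su; apply: (@ex_true_then_false _ u.+1 Su) => -[b [bu [b_u _]]].
by rewrite (mpow_low bu (ltnSn u)) eqxx in b_u.
Qed.

Lemma is_ord_of_vord a (u n : nat) :
  mpow R n a -> is_val a u -> is_vord R u n -> is_ord R a n.
Proof. by move=> an au [_ not_u]; split=> // an1; apply: not_u; exists a. Qed.

Hypotheses (R1 : R (sconst 1)) (RM : forall a b, R a -> R b -> R (smul a b)).

Lemma R_spow x (q : nat) : R x -> R (spow x q).
Proof. by move=> Rx; elim: q => //= q; apply: RM. Qed.

Lemma inv_xidealP x (e u : nat) : R x -> is_val x e -> Defs.inv (xideal R x) u ->
  inS R u /\ exists2 s, inS R s & u = (e + s)%N.
Proof.
move=> Rx vx [_ [[r [Rr ->]] xr_u]].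
split; first by exists (smul x r); split; [apply: RM|].
have [|s rs] := is_val_exists (a := r).
  by move=> r0; rewrite r0 muls0 in xr_u; exact: (is_val_neq0 xr_u).
by exists s; [exists r | apply: is_val_inj xr_u (is_valM vx rs)].
Qed.

Lemma xideal_spow_mul x f (p : nat) :
  R x -> R f -> (0 < p)%N -> xideal R x (smul (spow x p) f).
Proof.
case: p => // p Rx Rf _; exists (smul (spow x p) f).
by split; [apply: RM; first apply: R_spow | rewrite mulsA].
Qed.

End IdealsOfR.

Section BFLevel.
Variables (k : fieldType) (R : series k -> Prop) (e : nat) (x : series k).
Variables (f : 'I_e -> series k) (h : 'I_e -> nat).
Hypotheses (e_gt0 : (0 < e)%N) (vx : is_val x e).
Hypothesis vf : forall j, exists w, is_val (f j) w /\ is_w R e j w.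

Let bf_term (g : 'I_e -> series k) j :=
  smul (scomp (g j) x) (smul (spow x (h j)) (f j)).

Lemma is_val_bf_term g j (v : nat) : is_val (bf_term g j) v ->
  exists p w, (h j <= p)%N /\ is_val (f j) w /\ is_w R e j w /\ v = (e * p + w)%N.
Proof.
move=> term_v; have [w [fw wj]] := vf j.
have [|q gq] := is_val_exists (a := g j).
  by move=> g0; apply: (is_val_neq0 term_v); rewrite /bf_term g0 scomp0 mul0s.
exists (q + h j)%N, w; split; first exact: leq_addl.
do 2!split=> //; apply: is_val_inj term_v _; rewrite mulnDr -addnA.
exact: is_valM (is_val_scomp e_gt0 vx gq) (is_valM (is_val_spow _ vx) fw).
Qed.

Lemma is_val_bf_sum g (u : nat) : is_val (ssum (bf_term g)) u ->
  exists j p w,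
    (h j <= p)%N /\ is_val (f j) w /\ is_w R e j w /\ u = (e * p + w)%N.
Proof.
move=> sum_u; have [|j [v [term_v sum_v]]] := is_val_ssum_distinct _ (is_val_neq0 sum_u).
  move=> i j v /is_val_bf_term[p [w [_ [_ [[_ [wi _]] ->]]]]].
  move=> /is_val_bf_term[p' [w' [_ [_ [[_ [wj _]] eq_v]]]]].
  apply: val_inj => /=; rewrite -(modn_small (ltn_ord i)) -(modn_small (ltn_ord j)) -wi -wj.
  by rewrite -(modnMDl p w) -(modnMDl p' w') mulnC eq_v mulnC.
have [p [w [hp [fw [wj v_eq]]]]] := is_val_bf_term term_v.
by exists j, p, w; rewrite (is_val_inj sum_u sum_v).
Qed.

Lemma bf_sum_monomial j (p : nat) : (h j <= p)%N ->
  ssum (bf_term (fun l => if l == j then smonomial k (p - h j) else szero k)) =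
  smul (spow x p) (f j).
Proof.
move=> hp; rewrite (ssum_single (j0 := j)) => [|l /negbTE ne_l]; last first.
  by rewrite /bf_term ne_l scomp0 mul0s.
by rewrite /bf_term eqxx (scomp_monomial _ e_gt0 vx) -mulsA spowD subnK.
Qed.

End BFLevel.

Theorem proposition1p4 (k : fieldType) (R : series k -> Prop) :
  standing R -> BF R -> ess_div R.
Proof.
move=> [R_const [_ [_ [RM _]]]] [e [x [f [e_is [Rx [vx [Rf BF_levels]]]]]]].
have e_gt0 : (0 < e)%N by case: e_is.
have vf j := (Rf j).2.
exists e, x; do 3!split=> //; move=> u u_in.
have [Su [s Ss u_es]] := inv_xidealP RM Rx vx u_in; subst u.
have [n vord_n] := inS_vord Su; have [[b [bn bu]] _] := vord_n.
have [h [span_n _]] := BF_levels n.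
have [g b_eq] := (span_n b).1 bn; rewrite b_eq in bu.
have [j [p [w [hp [fw [[_ [wj w_min]] u_eq]]]]]] := is_val_bf_sum e_gt0 vx vf bu.
have le_ws : (w <= s)%N.
  by apply: w_min => //; rewrite -wj -(modnDl s e) u_eq mulnC modnMDl.
have p_gt0 : (0 < p)%N by case: (posnP p) u_eq => [->|//]; rewrite muln0; lia.
have au : is_val (smul (spow x p) (f j)) (e + s).
  by rewrite u_eq; apply: is_valM (is_val_spow p vx) fw.
exists (smul (spow x p) (f j)), n; split.
  exact: (xideal_spow_mul (R_const 1) RM Rx (proj1 (Rf j)) p_gt0).
split=> //; split=> //; apply: is_ord_of_vord au vord_n.
by apply/span_n; exists (fun l => if l == j then smonomial k (p - h j) else szero k);
  rewrite bf_sum_monomial.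
Qed.
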